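(* Let $E$ be a slim, semimodular diagram such that $c_\ell(E)$ is a coatom of $E$. Then the ideal ${\downarrow}c_\ell(E)=\{x\in E: x\le c_\ell(E)\}$ is a chain contained in $C_\ell(E)$; the set $E^{\circ}=E\setminus{\downarrow}c_\ell(E)$ is a sublattice of $E$ and (with the induced diagram) a slim, semimodular diagram with $|E^{\circ}|=|E|-\operatorname{length}(E)$; and $E^{\circ}$ determines $E$ up to similarity.
   Context: A slim, semimodular diagram is a planar Hasse diagram of a finite (upper) semimodular lattice whose set of join-irreducible elements contains no three-element antichain; diagrams are considered up to similarity (lattice isomorphism preserving left-to-right order of upper covers and of lower covers at every element). The left boundary chain $C_\ell(E)$ is the maximal chain from $0$ to $1$ forming the left boundary of the diagram. An element is doubly irreducible if it has at most one upper cover and at most one lower cover. $c_\ell(E)$ is the smallest doubly irreducible element of $C_\ell(E)$. $\operatorname{length}(E)$ is the length of the lattice (number of edges in a maximal chain). A coatom is an element covered by $1$. *)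

From mathcomp Require Import all_boot.
Set Implicit Arguments. Unset Strict Implicit. Unset Printing Implicit Defensive.

(* A planar lattice diagram, up to similarity, is encoded by its two
   linear orders "left-to-right" and "right-to-left" (Kelly--Rival): an
   element x of the finite carrier set E (inside a finite type T) is given
   two integer coordinates p1 x, p2 x, injective on E.  The lattice order is
   x <= y iff p1 x <= p1 y and p2 x <= p2 y (dominance drawing), and for
   incomparable x, y, "x is to the left of y" iff p1 x < p1 y (then
   p2 y < p2 x). *)

Section Diagrams.
Variables (T : finType) (p1 p2 : T -> nat).

Definition dle (x y : T) : bool := (p1 x <= p1 y) && (p2 x <= p2 y).
Definition dlt (x y : T) : bool := (x != y) && dle x y.
Definition dleft (x y : T) : bool := (p1 x < p1 y) && (p2 y < p2 x).
Definition incomp (x y : T) : bool := ~~ dle x y && ~~ dle y x.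

Definition dcovers (A : {set T}) (x y : T) : bool :=
  [&& x \in A, y \in A, dlt x y & [forall z in A, ~~ (dlt x z && dlt z y)]].

Definition is_join (A : {set T}) (x y z : T) : bool :=
  [&& z \in A, dle x z, dle y z & [forall w in A, (dle x w && dle y w) ==> dle z w]].
Definition is_meet (A : {set T}) (x y z : T) : bool :=
  [&& z \in A, dle z x, dle z y & [forall w in A, (dle w x && dle w y) ==> dle w z]].

Definition is_lattice (A : {set T}) : Prop :=
  A != set0 /\
  (forall x y, x \in A -> y \in A -> exists z, is_join A x y z) /\
  (forall x y, x \in A -> y \in A -> exists z, is_meet A x y z).

Definition is_diagram (A : {set T}) : Prop :=
  {in A &, injective p1} /\ {in A &, injective p2} /\ is_lattice A.

Definition semimodular (A : {set T}) : Prop :=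
  forall x y z u v, dcovers A x y -> z \in A ->
    is_join A x z u -> is_join A y z v -> u = v \/ dcovers A u v.

Definition lower_covers (A : {set T}) (x : T) := [set y in A | dcovers A y x].
Definition upper_covers (A : {set T}) (x : T) := [set y in A | dcovers A x y].

(* join-irreducible: exactly one lower cover (so 0 is not join-irreducible) *)
Definition join_irr (A : {set T}) (x : T) : bool :=
  (x \in A) && (#|lower_covers A x| == 1).

Definition slim (A : {set T}) : Prop :=
  forall x y z, join_irr A x -> join_irr A y -> join_irr A z ->
    incomp x y -> incomp y z -> incomp x z -> False.

Definition ssdiagram (A : {set T}) : Prop :=
  is_diagram A /\ slim A /\ semimodular A.

Definition left_boundary (A : {set T}) : {set T} :=
  [set x in A | [forall y in A, ~~ dleft y x]].

Definition doubly_irr (A : {set T}) (x : T) : bool :=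
  [&& x \in A, #|upper_covers A x| <= 1 & #|lower_covers A x| <= 1].

Definition is_cl (A : {set T}) (c : T) : Prop :=
  [/\ c \in left_boundary A, doubly_irr A c &
      forall d, d \in left_boundary A -> doubly_irr A d -> dle c d].

Definition is_top (A : {set T}) (t : T) : bool :=
  (t \in A) && [forall x in A, dle x t].
Definition coatom (A : {set T}) (c : T) : Prop :=
  exists t, is_top A t /\ dcovers A c t.

Definition ideal (A : {set T}) (c : T) : {set T} := [set x in A | dle x c].

Definition dchain (S : {set T}) : bool :=
  [forall x in S, forall y in S, dle x y || dle y x].

Definition dlength (A : {set T}) : nat :=
  (\max_(S : {set T} | (S \subset A) && dchain S) #|S|).-1.

Definition sublattice (A B : {set T}) : Prop :=
  B \subset A /\
  forall x y z, x \in B -> y \in B ->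
    (is_join A x y z -> z \in B) /\ (is_meet A x y z -> z \in B).

Definition circ (A : {set T}) (c : T) : {set T} := A :\: ideal A c.

End Diagrams.

(* similarity of diagrams: a bijection preserving both linear orders,
   i.e. a lattice isomorphism preserving the left-right relation *)
Definition similar (T T' : finType) (p1 p2 : T -> nat) (q1 q2 : T' -> nat)
    (A : {set T}) (B : {set T'}) : Prop :=
  exists f : T -> T',
    [/\ {in A &, injective f}, f @: A = B,
        {in A &, forall x y, (p1 x < p1 y) = (q1 (f x) < q1 (f y))} &
        {in A &, forall x y, (p2 x < p2 y) = (q2 (f x) < q2 (f y))}].

From mathcomp Require Import all_boot zify.
Set Implicit Arguments. Unset Strict Implicit. Unset Printing Implicit Defensive.

(* The ideal of c is a chain on the left boundary: an element of the left
   boundary below c with two lower covers would have a doubly irreducible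
   left-boundary lower cover strictly below c.  Slimness then gives E° a least
   element (two minimal ones together with c would be three incomparable
   join-irreducibles), and by induction along the chain, using semimodularity,
   every u <= c is covered by a least element phi u of E°.  This makes E° closed
   under meets and transports join-irreducibility, so E° is slim and
   semimodular; {t} with the ideal is a maximal chain, giving the length.
   Finally E is the chain glued to the left boundary of E° along phi, and both
   coordinate orders of E are determined by this gluing, so E° determines E. *)

Section DiagramOrder.
Variables (T : finType) (p1 p2 : T -> nat).
Local Notation le := (dle p1 p2).
Local Notation lt := (dlt p1 p2).

Lemma ex_minn_on (P : pred T) (F : T -> nat) x0 : P x0 ->
  exists2 x, P x & forall y, P y -> F x <= F y.
Proof. by move=> P0; case: (arg_minnP F P0) => x Px H; exists x. Qed.

Lemma ex_maxn_on (P : pred T) (F : T -> nat) x0 : P x0 ->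
  exists2 x, P x & forall y, P y -> F y <= F x.
Proof. by move=> P0; case: (arg_maxnP F P0) => x Px H; exists x. Qed.

Lemma dle_refl x : le x x.
Proof. by rewrite /dle !leqnn. Qed.

Lemma dle_trans y x z : le x y -> le y z -> le x z.
Proof. rewrite /dle => /andP[? ?] /andP[? ?]; apply/andP; split; lia. Qed.

Lemma dle_p1 x y : le x y -> p1 x <= p1 y. Proof. by case/andP. Qed.
Lemma dle_p2 x y : le x y -> p2 x <= p2 y. Proof. by case/andP. Qed.

Lemma dltW x y : lt x y -> le x y. Proof. by case/andP. Qed.

Lemma dltxx x : lt x x = false. Proof. by rewrite /dlt eqxx. Qed.

Variable A : {set T}.
Hypothesis inj1 : {in A &, injective p1}.

Lemma dle_anti x y : x \in A -> y \in A -> le x y -> le y x -> x = y.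
Proof. by move=> xA yA /dle_p1 ? /dle_p1 ?; apply: inj1 => //; lia. Qed.

Lemma dle_eqVlt x y : le x y -> x = y \/ lt x y.
Proof. by move=> xy; case: (eqVneq x y) => [->|nxy]; [left | right; apply/andP]. Qed.

Lemma dlt_p1 x y : x \in A -> y \in A -> lt x y -> p1 x < p1 y.
Proof.
move=> xA yA /andP[nxy /dle_p1 xy]; rewrite ltn_neqAle xy andbT.
by apply: contra nxy => /eqP/inj1-> //.
Qed.

Hypothesis inj2 : {in A &, injective p2}.

Lemma dlt_p2 x y : x \in A -> y \in A -> lt x y -> p2 x < p2 y.
Proof.
move=> xA yA /andP[nxy /dle_p2 xy]; rewrite ltn_neqAle xy andbT.
by apply: contra nxy => /eqP/inj2-> //.
Qed.

Lemma dlt_le_trans y x z : x \in A -> y \in A -> z \in A -> lt x y -> le y z -> lt x z.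
Proof.
move=> xA yA zA /andP[nxy xy] yz; rewrite /dlt (dle_trans xy yz) andbT.
by apply: contra nxy => /eqP zx; rewrite -zx in yz yA *; rewrite (dle_anti xA yA xy yz).
Qed.

Lemma dlt_trans y x z : x \in A -> y \in A -> z \in A -> lt x y -> lt y z -> lt x z.
Proof. by move=> xA yA zA xy /dltW; apply: dlt_le_trans. Qed.

Lemma dlt_asym x y : x \in A -> y \in A -> lt x y -> le y x -> False.
Proof. by move=> xA yA /(dlt_p1 xA yA) ? /dle_p1 ?; lia. Qed.

Lemma incomp_dleft x y : x \in A -> y \in A -> ~~ le x y -> ~~ le y x ->
  dleft p1 p2 x y || dleft p1 p2 y x.
Proof.
move=> xA yA nxy nyx; have np1 : p1 x != p1 y.
  by apply: contra nxy => /eqP/inj1-> //; rewrite dle_refl.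
by move: nxy nyx np1; rewrite /dle /dleft; lia.
Qed.

Lemma left_boundary_in x : x \in left_boundary p1 p2 A -> x \in A.
Proof. by rewrite inE => /andP[]. Qed.

Lemma left_boundary_dleftF x y :
  x \in left_boundary p1 p2 A -> y \in A -> dleft p1 p2 y x = false.
Proof. by rewrite inE => /andP[_ /forall_inP H] yA; apply/negbTE/H. Qed.

Lemma left_boundary_incomp u w : u \in left_boundary p1 p2 A -> w \in A ->
  ~~ le u w -> ~~ le w u -> p1 u < p1 w /\ p2 w < p2 u.
Proof.
move=> uL wA nuw nwu; have := incomp_dleft (left_boundary_in uL) wA nuw nwu.
by rewrite (left_boundary_dleftF uL wA) orbF => /andP[].
Qed.

Lemma left_boundary_chain x y : x \in left_boundary p1 p2 A ->
  y \in left_boundary p1 p2 A -> le x y || le y x.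
Proof.
move=> xL yL; case: (boolP (le x y)) => //= nxy; apply: contraT => nyx.
have := incomp_dleft (left_boundary_in xL) (left_boundary_in yL) nxy nyx.
by rewrite (left_boundary_dleftF xL (left_boundary_in yL))
           (left_boundary_dleftF yL (left_boundary_in xL)).
Qed.

Local Notation cov := (dcovers p1 p2 A).

Lemma dcoversP x y : cov x y ->
  [/\ x \in A, y \in A, lt x y & forall z, z \in A -> lt x z -> lt z y -> False].
Proof.
case/and4P=> xA yA xy /forall_inP H; split=> // z zA xz zy.
by have := H z zA; rewrite xz zy.
Qed.

Lemma dcoversI x y : x \in A -> y \in A -> lt x y ->
  (forall z, z \in A -> lt x z -> lt z y -> False) -> cov x y.
Proof.
move=> xA yA xy H; apply/and4P; split=> //; apply/forall_inP => z zA.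
by apply/negP => /andP[xz zy]; apply: H xz zy.
Qed.

Lemma dcovers_lt x y : cov x y -> lt x y. Proof. by case/dcoversP. Qed.

Lemma lower_coversE x y : (y \in lower_covers p1 p2 A x) = cov y x.
Proof. by rewrite inE andb_idl => // /dcoversP[]. Qed.

Lemma upper_coversE x y : (y \in upper_covers p1 p2 A x) = cov x y.
Proof. by rewrite inE andb_idl => // /dcoversP[]. Qed.

Lemma lower_cover_above x y : x \in A -> y \in A -> lt x y ->
  exists z, cov z y /\ le x z.
Proof.
move=> xA yA xy; have P0 : [&& x \in A, le x x & lt x y] by rewrite xA dle_refl.
case: (ex_maxn_on (P := fun z => [&& z \in A, le x z & lt z y]) p1 P0) => z /and3P[zA xz zy] M.
exists z; split=> //; apply: dcoversI => // w wA zw wy.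
have := M w; rewrite wA (dle_trans xz (dltW zw)) wy => /(_ isT).
by move=> wz; have := leq_trans (dlt_p1 zA wA zw) wz; rewrite ltnn.
Qed.

Lemma upper_cover_below x y : x \in A -> y \in A -> lt x y ->
  exists z, cov x z /\ le z y.
Proof.
move=> xA yA xy; have P0 : [&& y \in A, lt x y & le y y] by rewrite yA xy dle_refl.
case: (ex_minn_on (P := fun z => [&& z \in A, lt x z & le z y]) p1 P0) => z /and3P[zA xz zy] M.
exists z; split=> //; apply: dcoversI => // w wA xw wz.
have := M w; rewrite wA xw (dle_trans (dltW wz) zy) => /(_ isT).
by move=> zw; have := leq_trans (dlt_p1 wA zA wz) zw; rewrite ltnn.
Qed.

Lemma dcovers_le_uniq x y y' : cov x y -> cov x y' -> le y y' -> y = y'.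
Proof.
case/dcoversP=> _ yA xy _ /dcoversP[_ y'A _ H'] yy'.
by case: (dle_eqVlt yy') => // /(H' y yA xy).
Qed.

Lemma dcovers_le_uniq_low x x' y : cov x y -> cov x' y -> le x x' -> x = x'.
Proof.
case/dcoversP=> _ _ _ H /dcoversP[x'A _ x'y _] xx'.
by case: (dle_eqVlt xx') => // /H; move/(_ x'A x'y).
Qed.

Lemma dcovers_neq_incomp x x' y : cov x y -> cov x' y -> x != x' ->
  ~~ le x x' /\ ~~ le x' x.
Proof.
move=> xy x'y nxx'; split; apply: contra nxx' => h.
  by rewrite (dcovers_le_uniq_low xy x'y h).
by rewrite (dcovers_le_uniq_low x'y xy h).
Qed.

(* The left-most lower cover of a left-boundary element lies on the left boundary. *)
Lemma left_boundary_lower_cover y z : y \in left_boundary p1 p2 A -> cov z y ->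
  exists a, cov a y /\ a \in left_boundary p1 p2 A.
Proof.
move=> yL zy; case: (ex_minn_on (P := fun a => cov a y) p1 zy) => a ay M.
exists a; split => //; have [aA yA ay' Ha] := dcoversP ay.
rewrite inE aA /=; apply/forall_inP => w wA; apply/negP => /andP[w1 w2].
have ayp := dlt_p1 aA yA ay'.
case: (boolP (le y w)) => [/dle_p1 yw|nyw].
  by have := leq_trans ayp (ltnW (leq_ltn_trans yw w1)); rewrite ltnn.
case: (boolP (le w y)) => [wy|nwy]; last first.
  have [yw _] := left_boundary_incomp yL wA nyw nwy.
  by have := ltn_trans yw (ltn_trans w1 ayp); rewrite ltnn.
have wy' : lt w y.
  rewrite /dlt wy andbT; apply/eqP => ew; subst w.
  by have := ltn_trans w1 ayp; rewrite ltnn.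
have [a' [a'y wa']] := lower_cover_above wA yA wy'.
have [a'A _ a'y' _] := dcoversP a'y.
have m := M a' a'y.
case: (eqVneq a' a) => [E|na]; first by subst a'; have := leq_trans w2 (dle_p2 wa'); rewrite ltnn.
apply: (Ha a' a'A) => //; rewrite /dlt eq_sym na /dle m /=.
exact: ltnW (leq_trans w2 (dle_p2 wa')).
Qed.

End DiagramOrder.

Arguments dle_refl {T p1 p2} x.

Section LatticeDiagram.
Variables (T : finType) (p1 p2 : T -> nat).
Local Notation le := (dle p1 p2).
Local Notation lt := (dlt p1 p2).
Variable A : {set T}.
Hypothesis inj1 : {in A &, injective p1}.
Hypothesis latA : is_lattice p1 p2 A.
Local Notation cov := (dcovers p1 p2 A).

Lemma is_joinP x y z : is_join p1 p2 A x y z ->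
  [/\ z \in A, le x z, le y z & forall w, w \in A -> le x w -> le y w -> le z w].
Proof.
case/and4P=> zA xz yz /forall_inP H; split=> // w wA xw yw.
by have := H w wA; rewrite xw yw.
Qed.

Lemma is_joinI x y z : z \in A -> le x z -> le y z ->
  (forall w, w \in A -> le x w -> le y w -> le z w) -> is_join p1 p2 A x y z.
Proof.
move=> zA xz yz H; apply/and4P; split=> //; apply/forall_inP => w wA.
by apply/implyP => /andP[]; apply: H.
Qed.

Lemma is_joinC x y z : is_join p1 p2 A x y z -> is_join p1 p2 A y x z.
Proof. by case/is_joinP=> zA xz yz H; apply: is_joinI => // w wA yw xw; apply: H. Qed.

Lemma is_meetP x y z : is_meet p1 p2 A x y z ->
  [/\ z \in A, le z x, le z y & forall w, w \in A -> le w x -> le w y -> le w z].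
Proof.
case/and4P=> zA zx zy /forall_inP H; split=> // w wA wx wy.
by have := H w wA; rewrite wx wy.
Qed.

Lemma is_meetI x y z : z \in A -> le z x -> le z y ->
  (forall w, w \in A -> le w x -> le w y -> le w z) -> is_meet p1 p2 A x y z.
Proof.
move=> zA zx zy H; apply/and4P; split=> //; apply/forall_inP => w wA.
by apply/implyP => /andP[]; apply: H.
Qed.

Lemma is_join_idr x y : le x y -> y \in A -> is_join p1 p2 A x y y.
Proof. by move=> xy yA; apply: is_joinI => //; apply: dle_refl. Qed.

Lemma join_ex x y : x \in A -> y \in A -> exists z, is_join p1 p2 A x y z.
Proof. by case: latA => _ [H _]; apply: H. Qed.

Lemma meet_ex x y : x \in A -> y \in A -> exists z, is_meet p1 p2 A x y z.
Proof. by case: latA => _ [_ H]; apply: H. Qed.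

Lemma bottom_ex : exists2 b, b \in A & forall x, x \in A -> le b x.
Proof.
case: latA => /set0Pn[x0 x0A] _.
case: (ex_minn_on (P := fun b => b \in A) p1 x0A) => b bA M.
exists b => // x xA; have [m /is_meetP[mA mb mx _]] := meet_ex bA xA.
suff <- : m = b by [].
by apply: inj1 => //; move/dle_p1: mb (M m mA); lia.
Qed.

Lemma lower_covers_join a b y : cov a y -> cov b y -> a != b ->
  forall w, w \in A -> le a w -> le b w -> le y w.
Proof.
move=> ay by_ nab w wA aw bw.
have [aA yA ay' Ha] := dcoversP ay; have [bA _ by' _] := dcoversP by_.
have [j /is_joinP[jA aj bj Hj]] := join_ex aA bA.
have jy : le j y by apply: Hj => //; apply: dltW.
case: (dle_eqVlt jy) => [<-|jy']; first exact: Hj.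
case: (dle_eqVlt aj) => [ej|aj']; last by case: (Ha j jA aj' jy').
by subst j; case/negP: nab; rewrite (dcovers_le_uniq_low by_ ay bj).
Qed.

(* If y on the left boundary has two lower covers, its left-boundary lower
   cover a has y as its only upper cover: any other upper cover of a would lie
   to the right of y and above the other lower cover of y. *)
Lemma left_boundary_upper_cover_uniq a b y a' :
  y \in left_boundary p1 p2 A -> a \in left_boundary p1 p2 A ->
  cov a y -> cov b y -> a != b -> cov a a' -> a' = y.
Proof.
move=> yL aL ay by_ nab aa'; apply/eqP; apply: contraT => na'y.
have [_ a'A aa'l _] := dcoversP aa'; have [bA _ by' _] := dcoversP by_.
have [n1 n2] : ~~ le a' y /\ ~~ le y a'.
  split; apply: contra na'y => h; first by rewrite (dcovers_le_uniq aa' ay h).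
  by rewrite (dcovers_le_uniq ay aa' h).
have [r1 r2] := left_boundary_incomp inj1 yL a'A n2 n1.
have [n3 n4] := dcovers_neq_incomp ay by_ nab.
have [r3 r4] := left_boundary_incomp inj1 aL bA n3 n4.
have ba' : le b a'.
  apply/andP; split; first exact: leq_trans (dle_p1 (dltW by')) (ltnW r1).
  exact: leq_trans (ltnW r4) (dle_p2 (dltW aa'l)).
by case/negP: n2; apply: (lower_covers_join ay by_ nab a'A (dltW aa'l) ba').
Qed.

Hypothesis smA : semimodular p1 p2 A.

Lemma semimodular_cover x y z v : cov x y -> z \in A -> le x z ->
  is_join p1 p2 A y z v -> z = v \/ cov z v.
Proof. by move=> xy zA xz; apply: (smA xy zA); apply: is_join_idr. Qed.

Lemma semimodular_join_covers a b c e : cov a b -> cov a c -> b != c ->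
  is_join p1 p2 A b c e -> cov b e.
Proof.
move=> ab ac nbc bce; have [_ bA ab' _] := dcoversP ab.
case: (semimodular_cover ac bA (dltW ab') (is_joinC bce)) => // ebe.
subst e; case/is_joinP: bce => _ _ cb _.
by case/negP: nbc; rewrite (dcovers_le_uniq ac ab cb).
Qed.

(** * The Jordan--Dedekind chain condition *)

Lemma cover_path_last a s : a \in A -> path cov a s -> last a s \in A.
Proof.
elim: s a => //= x s IH a aA /andP[ax ps].
by have [_ xA _ _] := dcoversP ax; apply: IH.
Qed.

Lemma cover_path_lt a s : a \in A -> path cov a s -> s != [::] -> lt a (last a s).
Proof.
elim: s a => //= x s IH a aA /andP[ax ps] _; have [_ xA ax' _] := dcoversP ax.
case: s IH ps => [//|y s] IH ps.
exact: (dlt_trans inj1 aA xA (cover_path_last xA ps) ax' (IH x xA ps isT)).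
Qed.

Lemma cover_path_le a s : a \in A -> path cov a s -> le a (last a s).
Proof.
move=> aA ps; case: (eqVneq s [::]) => [->|ns]; first exact: dle_refl.
exact: dltW (cover_path_lt aA ps ns).
Qed.

Lemma cover_path_uniq a s : path cov a s -> uniq (a :: s).
Proof.
move=> ps; apply: (@sorted_uniq _ (fun x y => p1 x < p1 y)).
- by move=> x y z; apply: ltn_trans.
- by move=> x; rewrite ltnn.
apply: sub_path ps => x y /dcoversP[xA yA xy _]; exact: (dlt_p1 inj1 xA yA xy).
Qed.

Lemma cover_path_mem a s x : a \in A -> path cov a s -> x \in a :: s ->
  (x \in A) && le x (last a s).
Proof.
elim: s a => [|y s IH] a aA /=; first by move=> _; rewrite inE => /eqP ->; rewrite aA dle_refl.
case/andP=> ay ps; have [_ yA ay' _] := dcoversP ay; rewrite inE => /orP[/eqP ->|xs].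
  by rewrite aA (dle_trans (dltW ay') (cover_path_le yA ps)).
exact: IH.
Qed.

Definition upset a := [set x in A | le a x].

Lemma upset_proper a z : a \in A -> z \in A -> lt a z -> upset z \proper upset a.
Proof.
move=> aA zA az; apply/properP; split.
  apply/subsetP => x; rewrite !inE => /andP[-> zx] /=.
  exact: dle_trans (dltW az) zx.
exists a; first by rewrite inE aA dle_refl.
by rewrite inE aA /=; apply/negP => za; apply: (dlt_asym inj1 aA zA az za).
Qed.

Lemma cover_path_ex a b : a \in A -> b \in A -> le a b ->
  exists2 s, path cov a s & last a s = b.
Proof.
have [n] := ubnP #|upset a|; elim: n a => // n IH a lt_n aA bA ab.
case: (dle_eqVlt ab) => [<-|ab']; first by exists [::].
have [z [az zb]] := upper_cover_below inj1 aA bA ab'.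
have [_ zA az' _] := dcoversP az.
have [s ps ls] := IH z (leq_trans (proper_card (upset_proper aA zA az')) lt_n) zA bA zb.
by exists (z :: s) => //=; rewrite az.
Qed.

(* Two maximal chains through distinct upper covers c, d of a are compared
   through a chain above the join of c and d, which covers both. *)
Lemma cover_paths_size a s1 s2 : a \in A -> path cov a s1 -> path cov a s2 ->
  last a s1 = last a s2 -> size s1 = size s2.
Proof.
have [n] := ubnP #|upset a|; elim: n a s1 s2 => // n IH a s1 s2 lt_n aA.
case: s1 => [|c s1]; case: s2 => [|d s2] // ps1 ps2 E.
- by move: E (cover_path_lt aA ps2 isT) => /= <-; rewrite dltxx.
- by move: E (cover_path_lt aA ps1 isT) => /= ->; rewrite dltxx.
move: ps1 ps2 E => /= /andP[ac ps1] /andP[ad ps2] E.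
have [_ cA acl _] := dcoversP ac; have [_ dA adl _] := dcoversP ad.
have mc := leq_trans (proper_card (upset_proper aA cA acl)) lt_n.
have md := leq_trans (proper_card (upset_proper aA dA adl)) lt_n.
case: (eqVneq c d) => [cd|ncd]; first by subst d; congr S; apply: (IH c).
have [e ce] := join_ex cA dA.
have ceC : cov c e by apply: semimodular_join_covers ac ad ncd ce.
have deC : cov d e.
  by apply: semimodular_join_covers ad ac _ (is_joinC ce); rewrite eq_sym.
have [_ eA _ _] := dcoversP ceC.
set b := last c s1; have bA : b \in A by apply: cover_path_last cA ps1.
have eb : le e b.
  case/is_joinP: ce => _ _ _; apply => //; first exact: cover_path_le.
  by rewrite /b E; apply: cover_path_le.
have [F pF lF] := cover_path_ex eA bA eb.
have h1 : size s1 = size (e :: F).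
  by apply: (IH c s1 (e :: F) mc cA ps1); rewrite /= ?ceC ?pF ?lF.
have h2 : size s2 = size (e :: F).
  by apply: (IH d s2 (e :: F) md dA ps2); rewrite /= ?deC ?pF // lF /b E.
by rewrite h1 h2.
Qed.

Lemma dchainP (S : {set T}) :
  dchain p1 p2 S -> forall x y, x \in S -> y \in S -> le x y || le y x.
Proof. by move=> /forall_inP H x y xS yS; apply: (forall_inP (H x xS)). Qed.

Lemma dchainI (S : {set T}) :
  (forall x y, x \in S -> y \in S -> le x y || le y x) -> dchain p1 p2 S.
Proof. by move=> H; apply/forall_inP => x xS; apply/forall_inP => y yS; apply: H. Qed.

Lemma dchain_le_max (S : {set T}) y : S \subset A -> dchain p1 p2 S -> y \in S ->
  (forall x, x \in S -> p1 x <= p1 y) -> forall x, x \in S -> le x y.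
Proof.
move=> /subsetP SA ch yS My x xS; case/orP: (dchainP ch xS yS) => // yx.
suff -> : x = y by apply: dle_refl.
by apply: inj1; [exact: SA | exact: SA | move/dle_p1: yx (My x xS); lia].
Qed.

(* Extend the chain minus its top to a maximal chain from a to b through its
   two largest elements; Jordan--Dedekind compares it with s. *)
Lemma dchain_card_le (S : {set T}) a s : S \subset A -> dchain p1 p2 S ->
  a \in A -> path cov a s ->
  (forall x, x \in S -> le a x && le x (last a s)) -> #|S| <= (size s).+1.
Proof.
have [n] := ubnP #|S|; elim: n S a s => // n IH S a s ltn SA ch aA ps bnd.
case: (set_0Vmem S) => [->|[y0 y0S]]; first by rewrite cards0.
have [y yS My] := ex_maxn_on (P := fun x => x \in S) p1 y0S.
set S' := S :\ y.
have cS : #|S| = #|S'|.+1 by rewrite (cardsD1 y S) yS.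
case: (set_0Vmem S') => [E|[z0 z0S]]; first by rewrite cS E cards0.
have [y' y'S My'] := ex_maxn_on (P := fun x => x \in S') p1 z0S.
have S'S : S' \subset S by apply: subsetDl.
have S'A : S' \subset A by apply: subset_trans SA.
have ch' : dchain p1 p2 S' by apply: dchainI => u v uS vS; apply: (dchainP ch);
  apply: (subsetP S'S).
move: (y'S); rewrite inE => /andP[ny' y'S0].
have yA : y \in A by apply: (subsetP SA).
have y'A : y' \in A by apply: (subsetP SA).
set b := last a s; have bA : b \in A by apply: cover_path_last aA ps.
have [s1 ps1 l1] := cover_path_ex aA y'A (proj1 (andP (bnd y' y'S0))).
have [s2 ps2 l2] := cover_path_ex y'A yA (dchain_le_max SA ch yS My y'S0).
have [s3 ps3 l3] := cover_path_ex yA bA (proj2 (andP (bnd y yS))).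
have h1 : #|S'| <= (size s1).+1.
  apply: (IH S' a s1) => //; first by rewrite -cS.
  move=> x xS; rewrite l1 (dchain_le_max S'A ch' y'S My') // andbT.
  by case/andP: (bnd x (subsetP S'S x xS)).
have h2 : 0 < size s2.
  by case: s2 ps2 l2 => [|? ?] //= _ E; move: ny'; rewrite E inE eqxx.
have pc : path cov a (s1 ++ s2 ++ s3) by rewrite !cat_path ps1 l1 ps2 l2 ps3.
have lc : last a (s1 ++ s2 ++ s3) = b by rewrite !last_cat l1 l2 l3.
have := cover_paths_size aA ps pc (esym lc); rewrite !size_cat => ->.
rewrite cS ltnS (leq_trans h1) // -addn1 leq_add2l.
exact: leq_trans h2 (leq_addr _ _).
Qed.

Lemma dlengthE (S : {set T}) : S \subset A -> dchain p1 p2 S ->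
  (forall S' : {set T}, S' \subset A -> dchain p1 p2 S' -> #|S'| <= #|S|) ->
  dlength p1 p2 A = #|S|.-1.
Proof.
move=> SA chS maxS; rewrite /dlength; congr _.-1; apply/eqP; rewrite eqn_leq.
rewrite (leq_bigmax_cond (F := fun S0 : {set T} => #|S0|)) ?SA // andbT.
by apply/bigmax_leqP => S' /andP[S'A chS']; apply: maxS.
Qed.

End LatticeDiagram.

(* E is the chain I glued to the left boundary of E° along phi; these data
   determine both coordinate orders on E. *)
Record chain_gluing (T : finType) (p1 p2 : T -> nat) (E I Ec : {set T}) (phi : T -> T) :
    Prop := ChainGluing {
  gluing_inj1 : {in E &, injective p1};
  gluing_inj2 : {in E &, injective p2};
  gluing_split : forall x, (x \in E) = (x \in I) || (x \in Ec);
  gluing_disj : forall x, x \in I -> x \in Ec -> False;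
  gluing_chain : forall x y, x \in I -> y \in I -> dle p1 p2 x y || dle p1 p2 y x;
  gluing_phi_left : forall u, u \in I -> phi u \in left_boundary p1 p2 Ec;
  gluing_phi_onto : forall y, y \in left_boundary p1 p2 Ec -> exists2 u, u \in I & y = phi u;
  gluing_phi_mono : forall u u', u \in I -> u' \in I ->
    dle p1 p2 (phi u) (phi u') = dle p1 p2 u u';
  gluing_p1 : forall u y, u \in I -> y \in Ec -> p1 u < p1 y;
  gluing_p2 : forall u y, u \in I -> y \in Ec -> (p2 u < p2 y) = dle p1 p2 u y;
  gluing_le_phi : forall u y, u \in I -> y \in Ec -> dle p1 p2 u y = dle p1 p2 (phi u) y
}.

Section CoatomIdeal.
Variables (T : finType) (p1 p2 : T -> nat).
Local Notation le := (dle p1 p2).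
Local Notation lt := (dlt p1 p2).
Variable E : {set T}.
Hypothesis inj1 : {in E &, injective p1}.
Hypothesis inj2 : {in E &, injective p2}.
Hypothesis latE : is_lattice p1 p2 E.
Hypothesis slimE : slim p1 p2 E.
Hypothesis smE : semimodular p1 p2 E.
Variables (c t : T).
Hypothesis cL : c \in left_boundary p1 p2 E.
Hypothesis c_min : forall d, d \in left_boundary p1 p2 E -> doubly_irr p1 p2 E d -> le c d.
Hypothesis topt : is_top p1 p2 E t.
Hypothesis ct : dcovers p1 p2 E c t.
Local Notation cov := (dcovers p1 p2 E).
Local Notation lb := (left_boundary p1 p2 E).
Local Notation I := (ideal p1 p2 E c).
Local Notation Ec := (circ p1 p2 E c).

Let c_in : c \in E. Proof. exact: left_boundary_in cL. Qed.
Let t_in : t \in E. Proof. by case/andP: topt. Qed.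
Let le_top x : x \in E -> le x t. Proof. by case/andP: topt => _ /forall_inP; apply. Qed.

Let mem_ideal x : (x \in I) = (x \in E) && le x c. Proof. by rewrite inE. Qed.
Let mem_circ x : (x \in Ec) = (x \in E) && ~~ le x c.
Proof. by rewrite !inE; case: (x \in E); rewrite ?andbF ?andbT. Qed.

Let ideal_in x : x \in I -> x \in E. Proof. by rewrite mem_ideal => /andP[]. Qed.
Let ideal_le x : x \in I -> le x c. Proof. by rewrite mem_ideal => /andP[]. Qed.
Let circ_in x : x \in Ec -> x \in E. Proof. by rewrite mem_circ => /andP[]. Qed.
Let circ_nle x : x \in Ec -> ~~ le x c. Proof. by rewrite mem_circ => /andP[]. Qed.
Let c_in_ideal : c \in I. Proof. by rewrite mem_ideal c_in dle_refl. Qed.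

Lemma ideal_circ_disj x : x \in I -> x \in Ec -> False.
Proof. by move=> /ideal_le h /circ_nle; rewrite h. Qed.

Lemma ideal_circ_neq u y : u \in I -> y \in Ec -> u != y.
Proof. by move=> uI yEc; apply/eqP => uy; subst y; apply: ideal_circ_disj yEc. Qed.

Lemma ideal_or_circ x : x \in E -> (x \in I) || (x \in Ec).
Proof. by move=> xE; rewrite mem_ideal mem_circ xE; case: (le x c). Qed.

Lemma circ_up y z : y \in Ec -> z \in E -> le y z -> z \in Ec.
Proof.
move=> yEc zE yz; rewrite mem_circ zE; apply: contra (circ_nle yEc).
exact: dle_trans yz.
Qed.

Lemma circ_nle_ideal y u : y \in Ec -> u \in I -> ~~ le y u.
Proof. by move=> yEc uI; apply: contra (circ_nle yEc) => yu; apply: dle_trans yu (ideal_le uI). Qed.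

Lemma top_in_circ : t \in Ec.
Proof.
rewrite mem_circ t_in; apply/negP => tc.
exact: (dlt_asym inj1 c_in t_in (dcovers_lt ct) tc).
Qed.

Lemma circ_ge_c y : y \in Ec -> le c y -> y = t.
Proof.
move=> yEc cy; have yE := circ_in yEc; have [_ _ _ H] := dcoversP ct.
case: (dle_eqVlt cy) => [cy'|cy'].
  by subst y; move: (circ_nle yEc); rewrite dle_refl.
by case: (dle_eqVlt (le_top yE)) => // yt; case: (H y yE cy' yt).
Qed.

(** * The ideal of [c] is a chain on the left boundary *)

(* Otherwise the left-boundary lower cover of y would be a doubly
   irreducible element of the left boundary strictly below c. *)
Lemma left_boundary_lower_covers_le1 y : y \in lb -> le y c ->
  #|lower_covers p1 p2 E y| <= 1.
Proof.
have [n] := ubnP (p1 y); elim: n y => // n IH y lyn yL yc.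
apply/card_le1_eqP => a0 b0; rewrite !lower_coversE => a0y b0y.
apply/eqP; apply: contraT => nab0.
have [a [ay aL]] := left_boundary_lower_cover inj1 yL a0y.
have [b [by_ nba]] : exists b, cov b y /\ a != b.
  case: (eqVneq a a0) => [ea|na]; last by exists a0.
  by exists b0; rewrite ea eq_sym.
have [aE yE ay' _] := dcoversP ay.
have up1 : #|upper_covers p1 p2 E a| <= 1.
  apply/card_le1_eqP => u v; rewrite !upper_coversE => au av.
  by rewrite (left_boundary_upper_cover_uniq inj1 latE yL aL ay by_ nba au)
             (left_boundary_upper_cover_uniq inj1 latE yL aL ay by_ nba av).
have ac : le a c := dle_trans (dltW ay') yc.
have low1 := IH a (leq_trans (dlt_p1 inj1 aE yE ay') lyn) aL ac.
have dia : doubly_irr p1 p2 E a by rewrite /doubly_irr aE up1 low1.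
by case: (dlt_asym inj1 aE c_in (dlt_le_trans inj1 aE yE c_in ay' yc) (c_min aL dia)).
Qed.

Lemma ideal_sub_left_boundary x : x \in I -> x \in lb.
Proof.
move=> xI; have xc := ideal_le xI; have xE := ideal_in xI.
suff H : forall y, y \in lb -> le y c -> le x y -> x \in lb.
  exact: (H c cL (dle_refl c) xc).
move=> y; have [n] := ubnP (p1 y); elim: n y => // n IH y lyn yL yc xy.
have yE := left_boundary_in yL.
case: (dle_eqVlt xy) => [->//|xy'].
have [z [zy xz]] := lower_cover_above inj1 xE yE xy'.
have [a [ay aL]] := left_boundary_lower_cover inj1 yL zy.
have za : z = a.
  by apply: (card_le1_eqP (left_boundary_lower_covers_le1 yL yc)); rewrite lower_coversE.
subst z; have [aE _ ay' _] := dcoversP ay.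
apply: (IH a) => //; last exact: dle_trans (dltW ay') yc.
exact: leq_trans (dlt_p1 inj1 aE yE ay') lyn.
Qed.

Lemma ideal_chain x y : x \in I -> y \in I -> le x y || le y x.
Proof.
by move=> /ideal_sub_left_boundary xL /ideal_sub_left_boundary yL; exact: (left_boundary_chain inj1 xL yL).
Qed.

Lemma ideal_bottom : exists2 b, b \in I & forall x, x \in E -> le b x.
Proof. by have [b bE H] := bottom_ex inj1 latE; exists b; rewrite // mem_ideal bE H ?c_in. Qed.

Lemma ideal_lower_cover_uniq u a b : u \in I -> cov a u -> cov b u -> a = b.
Proof.
move=> uI au bu.
apply: (card_le1_eqP (left_boundary_lower_covers_le1 (ideal_sub_left_boundary uI) (ideal_le uI)));
  by rewrite lower_coversE.
Qed.

Lemma join_irrI x z : x \in E -> cov z x -> (forall a b, cov a x -> cov b x -> a = b) ->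
  join_irr p1 p2 E x.
Proof.
move=> xE zx H; have le1 : #|lower_covers p1 p2 E x| <= 1.
  by apply/card_le1_eqP => a b; rewrite !lower_coversE => ax bx; exact: (H _ _ bx ax).
have gt0 : 0 < #|lower_covers p1 p2 E x| by apply/card_gt0P; exists z; rewrite lower_coversE.
by rewrite /join_irr xE eqn_leq le1 gt0.
Qed.

Lemma ideal_join_irr u z : u \in I -> cov z u -> join_irr p1 p2 E u.
Proof.
by move=> uI zu; apply: (join_irrI (ideal_in uI) zu) => a b; apply: ideal_lower_cover_uniq.
Qed.

(* By minimality of c, u is not doubly irreducible; of its upper covers at
   most one lies in the chain. *)
Lemma ideal_upper_cover_circ u : u \in I -> u != c -> exists w, cov u w /\ w \in Ec.
Proof.
move=> uI nuc; have uE := ideal_in uI; have uL := ideal_sub_left_boundary uI.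
have nd : ~~ doubly_irr p1 p2 E u.
  by apply: contra nuc => du; apply/eqP/(dle_anti inj1 uE c_in (ideal_le uI) (c_min uL du)).
move: nd; rewrite /doubly_irr uE (left_boundary_lower_covers_le1 uL (ideal_le uI)) andbT -ltnNge.
case/card_gt1P => [w1 [w2 []]]; rewrite !upper_coversE => uw1 uw2 nw.
have [_ w1E _ _] := dcoversP uw1; have [_ w2E _ _] := dcoversP uw2.
case/orP: (ideal_or_circ w1E) => [w1I|]; last by exists w1.
case/orP: (ideal_or_circ w2E) => [w2I|]; last by exists w2.
case/negP: nw; case/orP: (ideal_chain w1I w2I) => h.
  by rewrite (dcovers_le_uniq uw1 uw2 h).
by rewrite (dcovers_le_uniq uw2 uw1 h).
Qed.

Lemma circ_minimal_join_irr x : x \in Ec -> (forall z, z \in Ec -> le z x -> z = x) ->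
  join_irr p1 p2 E x.
Proof.
move=> xEc minx; have xE := circ_in xEc; have [b bI Hb] := ideal_bottom.
have bx : lt b x by rewrite /dlt Hb // andbT; apply: ideal_circ_neq.
have [z [zx _]] := lower_cover_above inj1 (ideal_in bI) xE bx.
have lowI a : cov a x -> a \in I.
  move=> ax; have [aE _ axl _] := dcoversP ax.
  case/orP: (ideal_or_circ aE) => // aEc.
  by move: (axl); rewrite (minx a aEc (dltW axl)) dltxx.
apply: join_irrI xE zx _ => a a' ax a'x.
case/orP: (ideal_chain (lowI a ax) (lowI a' a'x)) => h.
  exact: dcovers_le_uniq_low ax a'x h.
exact/esym/(dcovers_le_uniq_low a'x ax h).
Qed.

(* Two incomparable minimal elements of E°, together with c, would form a
   three-element antichain of join-irreducibles. *)
Lemma circ_least : exists2 d, d \in Ec & forall y, y \in Ec -> le d y.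
Proof.
have minimal_below y : y \in Ec ->
    exists2 m, (m \in Ec) && le m y & forall z, z \in Ec -> le z m -> z = m.
  move=> yEc; have P0 : (y \in Ec) && le y y by rewrite yEc dle_refl.
  have [m /andP[mEc my] M] := ex_minn_on (P := fun x => (x \in Ec) && le x y) p1 P0.
  exists m; rewrite ?mEc // => z zEc zm; apply: inj1; rewrite ?circ_in //.
  by apply/eqP; rewrite eqn_leq (dle_p1 zm) M // zEc (dle_trans zm my).
have [d /andP[dEc _] mind] := minimal_below t top_in_circ.
exists d => // y yEc; have [m /andP[mEc my] minm] := minimal_below y yEc.
case: (boolP (le d m)) => [dm|n1]; first exact: (dle_trans dm my).
have n2 : ~~ le m d by apply: contra n1 => md; rewrite (mind m mEc md) dle_refl.
have nc x : x \in Ec -> x != t -> ~~ le c x.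
  by move=> xEc; apply: contra => /(circ_ge_c xEc) ->.
have nd : ~~ le c d.
  by apply: nc dEc _; apply: contra n2 => /eqP ->; apply: le_top (circ_in mEc).
have nm : ~~ le c m.
  by apply: nc mEc _; apply: contra n1 => /eqP ->; apply: le_top (circ_in dEc).
have [b bI Hb] := ideal_bottom.
have bc : lt b c.
  by rewrite /dlt Hb ?c_in // andbT; apply: contra nd => /eqP <-; apply: Hb (circ_in dEc).
have [z [zc _]] := lower_cover_above inj1 (ideal_in bI) c_in bc.
exfalso; apply: (slimE (ideal_join_irr c_in_ideal zc) (circ_minimal_join_irr dEc mind)
               (circ_minimal_join_irr mEc minm)).
- by rewrite /incomp nd circ_nle.
- by rewrite /incomp n1 n2.
- by rewrite /incomp nm circ_nle.
Qed.

(** * Least upper covers in [E°] *)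

Lemma bottom_cover_circ b d : b \in I -> (forall x, x \in E -> le b x) ->
  d \in Ec -> (forall y, y \in Ec -> le d y) -> cov b d.
Proof.
move=> bI Hb dEc Hd; have dE := circ_in dEc.
case: (eqVneq b c) => [ebc|nbc].
  by subst b; rewrite (circ_ge_c dEc (Hb d dE)).
have [w [bw wEc]] := ideal_upper_cover_circ bI nbc.
have [_ wE _ Hw] := dcoversP bw.
have bd : lt b d by rewrite /dlt Hb // andbT; apply: ideal_circ_neq.
by case: (dle_eqVlt (Hd w wEc)) => [->//|dw]; case: (Hw d dE bd dw).
Qed.

(* Induction along the chain: if u' -< u and v' is the least element of E°
   above u', semimodularity makes u -< u \/ v'. *)
Lemma ideal_cover_circ u : u \in I ->
  exists v, [/\ v \in Ec, cov u v & forall y, y \in Ec -> le u y -> le v y].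
Proof.
have [b bI Hb] := ideal_bottom; have [d dEc Hd] := circ_least.
have [n] := ubnP (p1 u); elim: n u => // n IH u lun uI.
have uE := ideal_in uI; have bE := ideal_in bI.
case: (eqVneq u b) => [eub|nub].
  by subst u; exists d; split => // [|y yEc _]; [apply: bottom_cover_circ | apply: Hd].
have bu : lt b u by rewrite /dlt eq_sym nub Hb.
have [u' [u'u _]] := lower_cover_above inj1 bE uE bu.
have [u'E _ u'ul _] := dcoversP u'u.
have u'I : u' \in I by rewrite mem_ideal u'E (dle_trans (dltW u'ul) (ideal_le uI)).
have [v' [v'Ec u'v' Hv']] := IH u' (leq_trans (dlt_p1 inj1 u'E uE u'ul) lun) u'I.
have [v vj] := join_ex latE (circ_in v'Ec) uE.
have [vE v'v uv Hv] := is_joinP vj.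
have vEc : v \in Ec := circ_up v'Ec vE v'v.
exists v; split => //.
  case: (semimodular_cover smE u'v' uE (dltW u'ul) vj) => // euv.
  by subst v; case: (ideal_circ_disj uI vEc).
move=> y yEc uy; apply: Hv => //; first exact: circ_in.
by apply: Hv' => //; apply: dle_trans (dltW u'ul) uy.
Qed.

Definition phi u := odflt u [pick v | [&& v \in Ec, le u v & [forall y in Ec, le u y ==> le v y]]].

Lemma phiP u : u \in I ->
  [/\ phi u \in Ec, cov u (phi u) & forall y, y \in Ec -> le u y -> le (phi u) y].
Proof.
move=> uI; have [v [vEc uv Hv]] := ideal_cover_circ uI.
have uv' := dltW (dcovers_lt uv).
rewrite /phi; case: pickP => [w /and3P[wEc uw /forall_inP Hw] | H] /=; last first.
  move: (H v); rewrite vEc uv' /=; case/negP; apply/forall_inP => y yEc.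
  by apply/implyP; apply: Hv.
suff -> : w = v by [].
apply: (dle_anti inj1 (circ_in wEc) (circ_in vEc)); last exact: Hv.
by move/implyP: (Hw v vEc); apply.
Qed.

Lemma phi_circ u : u \in I -> phi u \in Ec. Proof. by case/phiP. Qed.
Lemma phi_cover u : u \in I -> cov u (phi u). Proof. by case/phiP. Qed.
Lemma phi_le u : u \in I -> le u (phi u). Proof. by move/phi_cover/dcovers_lt/dltW. Qed.
Lemma phi_least u y : u \in I -> y \in Ec -> le u y -> le (phi u) y.
Proof. by case/phiP => _ _; apply. Qed.

Lemma le_phi u y : u \in I -> y \in Ec -> le (phi u) y = le u y.
Proof.
move=> uI yEc; apply/idP/idP; last exact: phi_least.
exact: dle_trans (phi_le uI).
Qed.

(** * [E°] is a slim semimodular sublattice *)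

(* A meet z of elements of E° inside the ideal would lie below phi z. *)
Lemma circ_meet_closed x y z : x \in Ec -> y \in Ec -> is_meet p1 p2 E x y z -> z \in Ec.
Proof.
move=> xEc yEc /is_meetP[zE zx zy H]; case/orP: (ideal_or_circ zE) => // zI.
have pz : le (phi z) z by apply: H; rewrite ?circ_in ?phi_circ ?phi_least.
by case: (dlt_asym inj1 zE (circ_in (phi_circ zI)) (dcovers_lt (phi_cover zI)) pz).
Qed.

Lemma circ_sub : Ec \subset E. Proof. by apply/subsetP => x /circ_in. Qed.

Lemma circ_sublattice : sublattice p1 p2 E Ec.
Proof.
split; first exact: circ_sub.
move=> x y z xEc yEc; split => [/is_joinP[zE xz _ _]|]; first exact: circ_up xEc zE xz.
exact: circ_meet_closed.
Qed.

Lemma dcovers_circ x y : x \in Ec -> y \in Ec -> dcovers p1 p2 Ec x y = cov x y.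
Proof.
move=> xEc yEc; apply/idP/idP => /dcoversP[_ _ xy H]; apply: dcoversI => //;
  rewrite ?circ_in // => z zE xz zy; apply: (H z) => //.
exact: circ_up xEc zE (dltW xz).
exact: circ_in.
Qed.

Lemma is_join_circ x y u : x \in Ec -> y \in Ec ->
  is_join p1 p2 Ec x y u <-> is_join p1 p2 E x y u.
Proof.
move=> xEc yEc; split => hu.
  have [j hj] := join_ex latE (circ_in xEc) (circ_in yEc).
  have [jE xj yj Hj] := is_joinP hj; have [uEc xu yu Hu] := is_joinP hu.
  suff -> : u = j by [].
  apply: (dle_anti inj1 (circ_in uEc) jE); first exact: Hu (circ_up xEc jE xj) xj yj.
  exact: Hj (circ_in uEc) xu yu.
have [uE xu yu Hu] := is_joinP hu.
by apply: is_joinI (circ_up xEc uE xu) xu yu _ => w /circ_in; apply: Hu.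
Qed.

Lemma circ_lattice : is_lattice p1 p2 Ec.
Proof.
split; first by apply/set0Pn; exists t; apply: top_in_circ.
split => x y xEc yEc.
  by have [j hj] := join_ex latE (circ_in xEc) (circ_in yEc); exists j; apply/is_join_circ.
have [m hm] := meet_ex latE (circ_in xEc) (circ_in yEc); exists m.
have [mE mx my Hm] := is_meetP hm.
by apply: is_meetI (circ_meet_closed xEc yEc hm) mx my _ => w /circ_in; apply: Hm.
Qed.

Lemma circ_semimodular : semimodular p1 p2 Ec.
Proof.
move=> x y z u v xy zEc hu hv; have [xEc yEc _ _] := dcoversP xy.
have [uEc _ _ _] := is_joinP hu; have [vEc _ _ _] := is_joinP hv.
rewrite dcovers_circ // in xy; rewrite dcovers_circ //.
exact: smE xy (circ_in zEc) (proj1 (is_join_circ _ xEc zEc) hu)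
  (proj1 (is_join_circ _ yEc zEc) hv).
Qed.

(* A join-irreducible x of E° is represented in E either by itself or by the
   element u of the ideal with phi u = x; representatives of incomparable
   elements stay incomparable. *)
Definition represents x x' :=
  x' = x \/ [/\ x' \in I, le x' x & forall y, y \in Ec -> le x' y -> le x y].

Lemma represents_nle x y x' y' : x \in Ec -> y \in Ec -> ~~ le x y ->
  represents x x' -> represents y y' -> ~~ le x' y'.
Proof.
move=> xEc yEc nxy [->|[x'I x'x Hx]] [->|[y'I y'y Hy]] //; apply/negP => h.
- by move: (circ_nle xEc); rewrite (dle_trans h (ideal_le y'I)).
- by move: nxy; rewrite (Hx y yEc h).
- by move: nxy; rewrite (Hx y yEc (dle_trans h y'y)).
Qed.

Lemma circ_join_irr_rep x : x \in Ec -> join_irr p1 p2 Ec x ->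
  exists2 x', join_irr p1 p2 E x' & represents x x'.
Proof.
move=> xEc /andP[_ /eqP lc1]; have xE := circ_in xEc.
case: (pickP (fun a => cov a x && (a \in I))) => [u /andP[ux uI] | H]; last first.
  exists x; last by left.
  rewrite /join_irr xE -lc1 /=; apply/eqP/eq_card => a.
  rewrite !lower_coversE; apply/idP/idP => ax; last first.
    by have [aEc _ _ _] := dcoversP ax; rewrite -dcovers_circ.
  have [aE _ _ _] := dcoversP ax.
  have aEc : a \in Ec by case/orP: (ideal_or_circ aE) => // aI; move: (H a); rewrite ax aI.
  by rewrite dcovers_circ.
have px : phi u = x.
  apply: (dcovers_le_uniq (phi_cover uI) ux); apply: phi_least => //.
  exact: dltW (dcovers_lt ux).
exists u; last by right; split; rewrite ?(dltW (dcovers_lt ux)) // -px => y; apply: phi_least.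
have [b bI Hb] := ideal_bottom.
case: (eqVneq u b) => [eub|nub].
  subst u; have : 0 < #|lower_covers p1 p2 Ec x| by rewrite lc1.
  case/card_gt0P => a; rewrite lower_coversE => ax.
  have [aEc _ _ _] := dcoversP ax; rewrite dcovers_circ // in ax.
  have xa : le x a by rewrite -px phi_least // Hb // circ_in.
  by case: (dlt_asym inj1 (circ_in aEc) xE (dcovers_lt ax) xa).
have bu : lt b u by rewrite /dlt eq_sym nub Hb ?ideal_in.
have [z [zu _]] := lower_cover_above inj1 (ideal_in bI) (ideal_in uI) bu.
exact: ideal_join_irr uI zu.
Qed.

Lemma circ_slim : slim p1 p2 Ec.
Proof.
move=> x y z jx jy jz /andP[nxy nyx] /andP[nyz nzy] /andP[nxz nzx].
have [xEc yEc zEc] := And3 (proj1 (andP jx)) (proj1 (andP jy)) (proj1 (andP jz)).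
have [x' jx' rx] := circ_join_irr_rep xEc jx.
have [y' jy' ry] := circ_join_irr_rep yEc jy.
have [z' jz' rz] := circ_join_irr_rep zEc jz.
apply: (slimE jx' jy' jz'); rewrite /incomp.
- by rewrite (represents_nle xEc yEc nxy rx ry) (represents_nle yEc xEc nyx ry rx).
- by rewrite (represents_nle yEc zEc nyz ry rz) (represents_nle zEc yEc nzy rz ry).
- by rewrite (represents_nle xEc zEc nxz rx rz) (represents_nle zEc xEc nzx rz rx).
Qed.

Lemma circ_ssdiagram : ssdiagram p1 p2 Ec.
Proof.
have i1 : {in Ec &, injective p1} by move=> x y /circ_in xE /circ_in yE; apply: inj1.
have i2 : {in Ec &, injective p2} by move=> x y /circ_in xE /circ_in yE; apply: inj2.
split; first by split; [exact: i1 | split; [exact: i2 | exact: circ_lattice]].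
by split; [exact: circ_slim | exact: circ_semimodular].
Qed.

(** * The length of [E] *)

Lemma card_circ : #|Ec| = #|E| - #|I|.
Proof.
by rewrite /circ cardsD (setIidPr _) //; apply/subsetP => x /ideal_in.
Qed.

Lemma top_ideal_dchain : dchain p1 p2 (t |: I).
Proof.
apply: dchainI => x y; rewrite !in_setU1.
case/orP=> [/eqP->|xI]; case/orP=> [/eqP->|yI]; rewrite ?dle_refl //.
- by rewrite le_top ?orbT ?ideal_in.
- by rewrite le_top ?ideal_in.
- exact: ideal_chain.
Qed.

(* {t} u I is a maximal chain: by Jordan--Dedekind no chain is longer than the
   cover path from the bottom through c to t. *)
Lemma dlength_ideal : dlength p1 p2 E = #|I|.
Proof.
have tI : t \notin I by apply/negP => tI; apply: ideal_circ_disj tI top_in_circ.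
have cardtI : #|t |: I| = #|I|.+1 by rewrite cardsU1 tI.
suff -> : dlength p1 p2 E = #|t |: I|.-1 by rewrite cardtI.
apply: dlengthE top_ideal_dchain _ => [|S SE chS].
  by apply/subsetP => x /setU1P[->|/ideal_in//]; apply: t_in.
have [b bI Hb] := ideal_bottom; have bE := ideal_in bI.
have [s0 ps0 l0] := cover_path_ex inj1 bE c_in (ideal_le bI).
have size_s0 : (size s0).+1 <= #|I|.
  rewrite -[(size s0).+1]/(size (b :: s0)) -(card_uniqP (cover_path_uniq inj1 ps0)); apply: subset_leq_card.
  apply/subsetP => x /(cover_path_mem inj1 bE ps0) /andP[xE]; rewrite l0 => xc.
  by rewrite mem_ideal xE.
have ps : path cov b (rcons s0 t) by rewrite rcons_path ps0 l0 ct.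
have bound := dchain_card_le inj1 latE smE SE chS bE ps.
rewrite last_rcons size_rcons in bound; rewrite cardtI (leq_trans (bound _)) //.
by move=> x /(subsetP SE) xE; rewrite Hb // le_top.
Qed.

(** * Recovering [E] from [E°] *)

Lemma ideal_p1_lt u y : u \in I -> y \in Ec -> p1 u < p1 y.
Proof.
move=> uI yEc; have uE := ideal_in uI; have yE := circ_in yEc.
case: (boolP (le u y)) => uy.
  have uy' : lt u y by rewrite /dlt uy ideal_circ_neq.
  exact: (dlt_p1 inj1 uE yE uy').
by have [] := left_boundary_incomp inj1 (ideal_sub_left_boundary uI) yE uy (circ_nle_ideal yEc uI).
Qed.

Lemma ideal_p2_lt u y : u \in I -> y \in Ec -> (p2 u < p2 y) = le u y.
Proof.
move=> uI yEc; have uE := ideal_in uI; have yE := circ_in yEc.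
case: (boolP (le u y)) => uy.
  have uy' : lt u y by rewrite /dlt uy ideal_circ_neq.
  by rewrite (dlt_p2 inj2 uE yE uy').
have [_ h] := left_boundary_incomp inj1 (ideal_sub_left_boundary uI) yE uy (circ_nle_ideal yEc uI).
by apply/negbTE; rewrite -leqNgt ltnW.
Qed.

Lemma phi_le_mono u u' : u \in I -> u' \in I -> le (phi u) (phi u') = le u u'.
Proof.
move=> uI u'I; rewrite le_phi ?phi_circ //; apply/idP/idP => [h|]; last first.
  by move/dle_trans; apply; apply: phi_le.
case/orP: (ideal_chain uI u'I) => // u'u.
case: (dle_eqVlt u'u) => [->|l]; first exact: dle_refl.
have [_ _ _ H] := dcoversP (phi_cover u'I).
by case: (H u (ideal_in uI) l); rewrite /dlt h ideal_circ_neq ?phi_circ.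
Qed.

Lemma phi_left_boundary u : u \in I -> phi u \in left_boundary p1 p2 Ec.
Proof.
move=> uI; rewrite inE phi_circ //=; apply/forall_inP => w wEc; apply/negP => /andP[w1 w2].
case: (boolP (le u w)) => uw.
  by move: (dle_p1 (phi_least uI wEc uw)); rewrite leqNgt w1.
have [_ h] := left_boundary_incomp inj1 (ideal_sub_left_boundary uI) (circ_in wEc) uw
  (circ_nle_ideal wEc uI).
by have := leq_trans w2 (leq_trans (ltnW h) (dle_p2 (phi_le uI))); rewrite ltnn.
Qed.

Lemma phi_c : phi c = t.
Proof. by apply: circ_ge_c; rewrite ?phi_circ ?phi_le ?c_in_ideal. Qed.

(* phi maps covers of the chain to covers: phi u = u \/ phi u' by
   semimodularity applied to u' -< u and u' -< phi u'. *)
Lemma phi_cover_mono u' u : u' \in I -> cov u' u -> u \in I -> cov (phi u') (phi u).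
Proof.
move=> u'I u'u uI; have [u'E uE u'ul _] := dcoversP u'u.
have pu'Ec := phi_circ u'I; have pu'E := circ_in pu'Ec.
have [j hj] := join_ex latE uE pu'E; have [jE uj pj Hj] := is_joinP hj.
have -> : phi u = j.
  apply: (dle_anti inj1 (circ_in (phi_circ uI)) jE).
    by apply: phi_least => //; apply: circ_up pu'Ec jE pj.
  apply: Hj; rewrite ?circ_in ?phi_circ ?phi_le // le_phi ?phi_circ //.
  exact: dle_trans (dltW u'ul) (phi_le uI).
case: (semimodular_cover smE u'u pu'E (phi_le u'I) hj) => // epj.
have [_ _ _ H] := dcoversP (phi_cover u'I).
by case: (H u uE u'ul); rewrite /dlt (ideal_circ_neq uI pu'Ec) epj uj.
Qed.

Lemma left_boundary_circ_phi y : y \in left_boundary p1 p2 Ec -> exists2 u, u \in I & y = phi u.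
Proof.
have [b bI Hb] := ideal_bottom.
have [n] := ubnP (p1 y); elim: n y => // n IH y lyn yL.
have yEc := left_boundary_in yL; have yE := circ_in yEc.
have pbEc := phi_circ bI; have pby : le (phi b) y by rewrite le_phi ?Hb.
case: (dle_eqVlt pby) => [<-|l]; first by exists b.
have i1c : {in Ec &, injective p1} by move=> ? ? /circ_in ? /circ_in ?; apply: inj1.
have [z [zy pz]] := lower_cover_above inj1 (circ_in pbEc) yE l.
have [zE _ _ _] := dcoversP zy; have zEc := circ_up pbEc zE pz.
have zy' : dcovers p1 p2 Ec z y by rewrite dcovers_circ.
have [a [ay aL]] := left_boundary_lower_cover i1c yL zy'.
have [aEc _ ayl _] := dcoversP ay; rewrite dcovers_circ // in ay.
have [u' u'I ea] := IH a (leq_trans (dlt_p1 i1c aEc yEc ayl) lyn) aL; subst a.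
have nu'c : u' != c.
  apply: contraTneq ay => ->; rewrite phi_c; apply/negP => /dcovers_lt ty.
  exact: (dlt_asym inj1 t_in yE ty (le_top yE)).
have u'c : lt u' c by rewrite /dlt nu'c ideal_le.
have [u [u'u uc]] := upper_cover_below inj1 (ideal_in u'I) c_in u'c.
have [_ uE _ _] := dcoversP u'u; have uI : u \in I by rewrite mem_ideal uE.
exists u => //; have pcov := phi_cover_mono u'I u'u uI.
apply: (dcovers_le_uniq ay pcov).
case/orP: (left_boundary_chain i1c yL (phi_left_boundary uI)) => // py.
by rewrite (dcovers_le_uniq pcov ay py) dle_refl.
Qed.

Lemma circ_gluing : chain_gluing p1 p2 E I Ec phi.
Proof.
split => //.
- by move=> x; apply/idP/idP => [/ideal_or_circ|/orP[/ideal_in|/circ_in]].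
- exact: ideal_circ_disj.
- exact: ideal_chain.
- exact: phi_left_boundary.
- exact: left_boundary_circ_phi.
- exact: phi_le_mono.
- exact: ideal_p1_lt.
- exact: ideal_p2_lt.
- by move=> u y uI yEc; rewrite le_phi.
Qed.
End CoatomIdeal.

Lemma dchain_lt_p1 (T : finType) (p1 p2 : T -> nat) (A : {set T}) x y :
  {in A &, injective p1} -> x \in A -> y \in A -> dle p1 p2 x y || dle p1 p2 y x ->
  (p1 x < p1 y) = (x != y) && dle p1 p2 x y.
Proof.
move=> inj xA yA /orP[h|h].
  case: (eqVneq x y) => [->|ne]; first by rewrite ltnn.
  by rewrite h (dlt_p1 (p2 := p2) inj xA yA) // /dlt ne h.
case: (eqVneq x y) => [->|ne]; first by rewrite ltnn.
rewrite ltnNge (dle_p1 h) /=; apply/esym/negP => xy.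
by case/eqP: ne; apply: inj => //; apply/eqP; rewrite eqn_leq (dle_p1 xy) (dle_p1 h).
Qed.

Lemma dchain_lt_p2 (T : finType) (p1 p2 : T -> nat) (A : {set T}) x y :
  {in A &, injective p2} -> x \in A -> y \in A -> dle p1 p2 x y || dle p1 p2 y x ->
  (p2 x < p2 y) = (x != y) && dle p1 p2 x y.
Proof.
move=> inj xA yA /orP[h|h].
  case: (eqVneq x y) => [->|ne]; first by rewrite ltnn.
  by rewrite h (dlt_p2 (p1 := p1) inj xA yA) // /dlt ne h.
case: (eqVneq x y) => [->|ne]; first by rewrite ltnn.
rewrite ltnNge (dle_p2 h) /=; apply/esym/negP => xy.
by case/eqP: ne; apply: inj => //; apply/eqP; rewrite eqn_leq (dle_p2 xy) (dle_p2 h).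
Qed.

Lemma ltn_inj_swap (T : finType) (p : T -> nat) (A : {set T}) a b :
  {in A &, injective p} -> a \in A -> b \in A -> a != b -> (p a < p b) = ~~ (p b < p a).
Proof.
move=> inj aA bA ne; rewrite ltn_neqAle -leqNgt andb_idl // => _.
by apply: contra ne => /eqP/inj->.
Qed.

Lemma gluing_phi_inj (T : finType) (p1 p2 : T -> nat) (E I Ec : {set T}) (phi : T -> T) :
  chain_gluing p1 p2 E I Ec phi -> {in I &, injective phi}.
Proof.
move=> G u v uI vI euv; have inE_I x : x \in I -> x \in E by rewrite (gluing_split G) => ->.
by apply: (dle_anti (p2 := p2) (gluing_inj1 G) (inE_I u uI) (inE_I v vI));
  rewrite -(gluing_phi_mono G) // euv dle_refl.
Qed.

Section GluingSimilar.
Variables (T : finType) (p1 p2 : T -> nat) (E I Ec : {set T}) (phi : T -> T).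
Variables (T' : finType) (q1 q2 : T' -> nat) (E' I' Ec' : {set T'}) (phi' : T' -> T').
Hypothesis G : chain_gluing p1 p2 E I Ec phi.
Hypothesis G' : chain_gluing q1 q2 E' I' Ec' phi'.
Variable g : T -> T'.
Hypothesis g_inj : {in Ec &, injective g}.
Hypothesis g_onto : g @: Ec = Ec'.
Hypothesis g_p1 : {in Ec &, forall x y, (p1 x < p1 y) = (q1 (g x) < q1 (g y))}.
Hypothesis g_p2 : {in Ec &, forall x y, (p2 x < p2 y) = (q2 (g x) < q2 (g y))}.

Let inE_I x : x \in I -> x \in E. Proof. by move=> h; rewrite (gluing_split G) h. Qed.
Let inE_Ec x : x \in Ec -> x \in E. Proof. by move=> h; rewrite (gluing_split G) h orbT. Qed.
Let inE'_I x : x \in I' -> x \in E'. Proof. by move=> h; rewrite (gluing_split G') h. Qed.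
Let inE'_Ec x : x \in Ec' -> x \in E'. Proof. by move=> h; rewrite (gluing_split G') h orbT. Qed.

Lemma g_circ y : y \in Ec -> g y \in Ec'. Proof. by move=> h; rewrite -g_onto imset_f. Qed.

Lemma g_dle x y : x \in Ec -> y \in Ec -> dle p1 p2 x y = dle q1 q2 (g x) (g y).
Proof.
move=> xEc yEc; rewrite /dle (leqNgt (p1 x)) (leqNgt (p2 x)).
by rewrite (leqNgt (q1 (g x))) (leqNgt (q2 (g x))) g_p1 // g_p2.
Qed.

Lemma g_dleft x y : x \in Ec -> y \in Ec -> dleft p1 p2 x y = dleft q1 q2 (g x) (g y).
Proof. by move=> xEc yEc; rewrite /dleft g_p1 // g_p2. Qed.

Lemma g_left_boundary y : y \in Ec ->
  (g y \in left_boundary q1 q2 Ec') = (y \in left_boundary p1 p2 Ec).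
Proof.
move=> yEc; rewrite !inE yEc g_circ //=; apply/forall_inP/forall_inP => H w wEc.
  by rewrite g_dleft //; apply: H; apply: g_circ.
by move: wEc; rewrite -g_onto => /imsetP[v vEc ->]; rewrite -g_dleft //; apply: H.
Qed.

Lemma g_left_boundary_onto y' : y' \in left_boundary q1 q2 Ec' ->
  exists2 y, y \in left_boundary p1 p2 Ec & y' = g y.
Proof.
move=> y'L; have := left_boundary_in y'L; rewrite -g_onto => /imsetP[y yEc ey].
by exists y; rewrite // -g_left_boundary // -ey.
Qed.

(* On the chain, the map is forced by phi' (glue_map u) = g (phi u). *)
Definition glue_map x :=
  if x \in Ec then g x else odflt (g x) [pick u' in I' | phi' u' == g (phi x)].

Lemma glue_map_circ y : y \in Ec -> glue_map y = g y. Proof. by rewrite /glue_map => ->. Qed.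

Lemma glue_map_ideal u : u \in I -> glue_map u \in I' /\ phi' (glue_map u) = g (phi u).
Proof.
move=> uI; have uEc : u \notin Ec by apply/negP => uEc; apply: (gluing_disj G uI uEc).
have phiuEc : phi u \in Ec := left_boundary_in (gluing_phi_left G uI).
have gL : g (phi u) \in left_boundary q1 q2 Ec'.
  by rewrite g_left_boundary // (gluing_phi_left G uI).
have [u' u'I eu'] := gluing_phi_onto G' gL.
rewrite /glue_map (negbTE uEc); case: pickP => [v /andP[vI /eqP ->] | H] //=.
by move: (H u'); rewrite u'I -eu' eqxx.
Qed.

Lemma glue_map_ideal_le u v : u \in I -> v \in I ->
  dle q1 q2 (glue_map u) (glue_map v) = dle p1 p2 u v.
Proof.
move=> uI vI; have [fuI Eu] := glue_map_ideal uI; have [fvI Ev] := glue_map_ideal vI.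
rewrite -(gluing_phi_mono G') // Eu Ev -g_dle ?(gluing_phi_mono G) //.
  exact: left_boundary_in (gluing_phi_left G uI).
exact: left_boundary_in (gluing_phi_left G vI).
Qed.

Lemma glue_map_ideal_circ_le u y : u \in I -> y \in Ec ->
  dle q1 q2 (glue_map u) (g y) = dle p1 p2 u y.
Proof.
move=> uI yEc; have [fuI Eu] := glue_map_ideal uI.
rewrite (gluing_le_phi G') ?g_circ // Eu -g_dle ?(gluing_le_phi G uI) //.
exact: left_boundary_in (gluing_phi_left G uI).
Qed.

Lemma glue_map_ideal_inj u v : u \in I -> v \in I -> glue_map u = glue_map v -> u = v.
Proof.
move=> uI vI euv; apply: (dle_anti (p2 := p2) (gluing_inj1 G) (inE_I uI) (inE_I vI)).
  by rewrite -glue_map_ideal_le // euv dle_refl.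
by rewrite -glue_map_ideal_le // euv dle_refl.
Qed.

Lemma glue_map_ideal_neq_circ u y : u \in I -> y \in Ec -> glue_map u != g y.
Proof.
move=> uI yEc; apply/eqP => e; have [fuI _] := glue_map_ideal uI.
by rewrite e in fuI; apply: (gluing_disj G' fuI (g_circ yEc)).
Qed.

Lemma glue_map_inj : {in E &, injective glue_map}.
Proof.
move=> x y; rewrite !(gluing_split G) => /orP[xI|xEc] /orP[yI|yEc].
- exact: glue_map_ideal_inj.
- by rewrite (glue_map_circ yEc) => /eqP; rewrite (negbTE (glue_map_ideal_neq_circ xI yEc)).
- by rewrite (glue_map_circ xEc) => /esym/eqP; rewrite (negbTE (glue_map_ideal_neq_circ yI xEc)).
- by rewrite !glue_map_circ //; apply: g_inj.
Qed.

Lemma glue_map_onto : glue_map @: E = E'.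
Proof.
apply/setP => y'; apply/imsetP/idP => [[x xE ->]|y'E].
  move: xE; rewrite (gluing_split G) => /orP[xI|xEc].
    by have [h _] := glue_map_ideal xI; apply: inE'_I.
  by rewrite glue_map_circ //; apply/inE'_Ec/g_circ.
move: y'E; rewrite (gluing_split G') => /orP[y'I|y'Ec].
  have [w wL Ew] := g_left_boundary_onto (gluing_phi_left G' y'I).
  have [u uI Eu] := gluing_phi_onto G wL.
  exists u; first exact: inE_I.
  have [fuI Efu] := glue_map_ideal uI.
  by apply: (gluing_phi_inj G') => //; rewrite Efu -Eu Ew.
move: y'Ec; rewrite -g_onto => /imsetP[y yEc ->].
by exists y; [apply: inE_Ec | rewrite glue_map_circ].
Qed.

Lemma glue_map_in x : x \in E -> glue_map x \in E'.
Proof. by move=> xE; rewrite -glue_map_onto imset_f. Qed.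

Lemma glue_map_ideal_lt_p1 u v : u \in I -> v \in I ->
  (p1 u < p1 v) = (q1 (glue_map u) < q1 (glue_map v)).
Proof.
move=> uI vI; have [fuI _] := glue_map_ideal uI; have [fvI _] := glue_map_ideal vI.
rewrite (dchain_lt_p1 (gluing_inj1 G) (inE_I uI) (inE_I vI) (gluing_chain G uI vI)).
rewrite (dchain_lt_p1 (gluing_inj1 G') (inE'_I fuI) (inE'_I fvI) (gluing_chain G' fuI fvI)).
by rewrite glue_map_ideal_le // (inj_in_eq glue_map_inj) ?inE_I.
Qed.

Lemma glue_map_ideal_lt_p2 u v : u \in I -> v \in I ->
  (p2 u < p2 v) = (q2 (glue_map u) < q2 (glue_map v)).
Proof.
move=> uI vI; have [fuI _] := glue_map_ideal uI; have [fvI _] := glue_map_ideal vI.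
rewrite (dchain_lt_p2 (gluing_inj2 G) (inE_I uI) (inE_I vI) (gluing_chain G uI vI)).
rewrite (dchain_lt_p2 (gluing_inj2 G') (inE'_I fuI) (inE'_I fvI) (gluing_chain G' fuI fvI)).
by rewrite glue_map_ideal_le // (inj_in_eq glue_map_inj) ?inE_I.
Qed.

Lemma glue_map_ideal_circ_lt_p2 u y : u \in I -> y \in Ec ->
  (p2 u < p2 y) = (q2 (glue_map u) < q2 (glue_map y)).
Proof.
move=> uI yEc; have [fuI _] := glue_map_ideal uI.
by rewrite (gluing_p2 G uI yEc) (glue_map_circ yEc) (gluing_p2 G' fuI (g_circ yEc))
  glue_map_ideal_circ_le.
Qed.

Lemma glue_map_p1 : {in E &, forall x y, (p1 x < p1 y) = (q1 (glue_map x) < q1 (glue_map y))}.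
Proof.
have lt_I_Ec u y : u \in I -> y \in Ec -> q1 (glue_map u) < q1 (glue_map y).
  move=> uI yEc; have [fuI _] := glue_map_ideal uI.
  by rewrite (glue_map_circ yEc) (gluing_p1 G' fuI (g_circ yEc)).
move=> x y; rewrite !(gluing_split G) => /orP[xI|xEc] /orP[yI|yEc].
- exact: glue_map_ideal_lt_p1.
- by rewrite (gluing_p1 G xI yEc) lt_I_Ec.
- by rewrite ltnNge ltnW ?(gluing_p1 G yI xEc) // ltnNge ltnW ?lt_I_Ec.
- by rewrite !glue_map_circ //; apply: g_p1.
Qed.

Lemma glue_map_p2 : {in E &, forall x y, (p2 x < p2 y) = (q2 (glue_map x) < q2 (glue_map y))}.
Proof.
move=> x y; rewrite !(gluing_split G) => /orP[xI|xEc] /orP[yI|yEc].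
- exact: glue_map_ideal_lt_p2.
- exact: glue_map_ideal_circ_lt_p2.
- have nxy : x != y by apply/eqP => exy; subst y; apply: (gluing_disj G yI xEc).
  have xE := inE_Ec xEc; have yE := inE_I yI.
  rewrite (ltn_inj_swap (gluing_inj2 G) xE yE nxy).
  rewrite (ltn_inj_swap (gluing_inj2 G') (glue_map_in xE) (glue_map_in yE)).
    by rewrite glue_map_ideal_circ_lt_p2.
  by rewrite (inj_in_eq glue_map_inj).
- by rewrite !glue_map_circ //; apply: g_p2.
Qed.

Lemma gluing_similar : similar p1 p2 q1 q2 E E'.
Proof.
by exists glue_map; split; [apply: glue_map_inj | apply: glue_map_onto | apply: glue_map_p1 |
  apply: glue_map_p2].
Qed.

End GluingSimilar.

Theorem mainTheorem5 (T : finType) (p1 p2 : T -> nat) (E : {set T}) (c : T) :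
  ssdiagram p1 p2 E -> is_cl p1 p2 E c -> coatom p1 p2 E c ->
  [/\ dchain p1 p2 (ideal p1 p2 E c),
      ideal p1 p2 E c \subset left_boundary p1 p2 E,
      sublattice p1 p2 E (circ p1 p2 E c),
      ssdiagram p1 p2 (circ p1 p2 E c) &
      #|circ p1 p2 E c| = #|E| - dlength p1 p2 E] /\
  (forall (T' : finType) (q1 q2 : T' -> nat) (E' : {set T'}) (c' : T'),
        ssdiagram q1 q2 E' -> is_cl q1 q2 E' c' -> coatom q1 q2 E' c' ->
        similar p1 p2 q1 q2 (circ p1 p2 E c) (circ q1 q2 E' c') ->
        similar p1 p2 q1 q2 E E').
Proof.
move=> [[inj1 [inj2 latE]] [slimE smE]] [cL _ c_min] [t [topt ct]].
split.
  split.
  - exact/dchainI/(ideal_chain inj1 latE cL c_min).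
  - exact/subsetP/(ideal_sub_left_boundary inj1 latE cL c_min).
  - exact: (circ_sublattice inj1 latE slimE smE cL c_min topt ct).
  - exact: (circ_ssdiagram inj1 inj2 latE slimE smE cL c_min topt ct).
  - by rewrite card_circ (dlength_ideal inj1 latE smE cL c_min topt ct).
move=> T' q1 q2 E' c' [[inj1' [inj2' latE']] [slimE' smE']] [cL' _ c_min'] [t' [topt' ct']].
move=> [g [g_inj g_onto g_p1 g_p2]].
exact: (gluing_similar (circ_gluing inj1 inj2 latE slimE smE cL c_min topt ct)
  (circ_gluing inj1' inj2' latE' slimE' smE' cL' c_min' topt' ct') g_inj g_onto g_p1 g_p2).
Qed.
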